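(* Let $m\ge 1$, $n=3m$, and $t\ge 2$. Put $X_t=G_{n,t}\setminus a_{t-1}$ and $Y_t=X_t\setminus a_{t-2}$. Then $I(X_t)\simeq I(Y_t)$.
   Context: For a finite simple graph $G$, $I(G)$ is its independence complex (simplicial complex on $V(G)$ whose simplices are the independent sets); $G\setminus v$ is the induced subgraph on $V(G)\setminus\{v\}$. For integers $n\ge 2$, $t\ge 0$, the graph $G_{n,t}$ has vertex set $\{a_0,\dots,a_t\}\cup\{b_{i,j},c_{i,j}: 1\le i\le t,\ 1\le j\le n-1\}$, and its edges are exactly: $b_{i,j}\sim b_{i,j+1}$ and $c_{i,j}\sim c_{i,j+1}$ for $1\le i\le t$, $1\le j\le n-2$; $b_{i,n-1}\sim b_{i+1,1}$ and $c_{i,n-1}\sim c_{i+1,1}$ for $1\le i\le t-1$; and $a_{i-1}\sim b_{i,1}$, $a_{i-1}\sim c_{i,1}$, $a_i\sim b_{i,n-1}$, $a_i\sim c_{i,n-1}$ for $1\le i\le t$. *)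

From HB Require Import structures.
From mathcomp Require Import all_boot all_order all_algebra.
From mathcomp Require Import all_classical all_reals.
From mathcomp Require Import topology normedtype.
Import numFieldNormedType.Exports.
Set Implicit Arguments. Unset Strict Implicit. Unset Printing Implicit Defensive.
Import Order.TTheory GRing.Theory Num.Theory.
Local Open Scope classical_set_scope.
Local Open Scope ring_scope.

(* A simple graph on a finite vertex type V is a symmetric irreflexive
   relation; the induced subgraph on S : {set V} is encoded by S itself. *)

(* Independent sets of the induced subgraph G[S] = simplices of I(G[S]). *)
Definition indep_in (V : finType) (adj : rel V) (S : {set V}) (I : {set V}) : bool :=
  (I \subset S) && [forall x in I, forall y in I, ~~ adj x y].

Definition del1 (V : finType) (v : V) : {set V} := [set~ v].
Definition del2 (V : finType) (v w : V) : {set V} := finset (fun x => (x != v) && (x != w)).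

(* a_k (0 <= k <= t)           is  inl k
   b_{i,j} (1<=i<=t,1<=j<=n-1) is  inr (i-1, j-1, false)
   c_{i,j}                     is  inr (i-1, j-1, true)              *)
Definition Gvert (n t : nat) : finType := ('I_t.+1 + ('I_t * 'I_n.-1 * bool))%type.

Definition Gadj0 (n t : nat) (u v : Gvert n t) : bool :=
  match u, v with
  | inr (i, j, c), inr (i2, j2, c2) =>
      (c == c2) &&
      (((val i == val i2) && ((val j).+1 == val j2))
       || (((val i).+1 == val i2) && (val j == n - 2)%N && (val j2 == 0%N)))
  | inl k, inr (i, j, _) =>
      ((val k == val i) && (val j == 0%N)) || ((val k == (val i).+1) && (val j == n - 2)%N)
  | _, _ => false
  end.

Definition Gadj (n t : nat) : rel (Gvert n t) := fun u v => Gadj0 u v || Gadj0 v u.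

Definition avert (n t k : nat) : Gvert n t := inl (inord k).

(* Points of |K| for a simplicial complex K on the finite vertex type V,
   realized in R^V (coordinates indexed by enum_rank): barycentric
   coordinates, nonnegative, summing to 1, with support a simplex of K. *)
Definition coord (R : realType) (V : finType) (x : 'rV[R]_#|V|) (v : V) : R :=
  x ord0 (enum_rank v).

Definition realization (R : realType) (V : finType) (K : pred {set V}) : set 'rV[R]_#|V| :=
  [set x | (forall v, 0 <= coord x v) /\ (\sum_(v : V) coord x v = 1)
           /\ K (finset (fun v => coord x v != 0))].

Definition homotopic_in (R : realType) (U W : topologicalType)
    (A : set U) (B : set W) (f g : U -> W) : Prop :=
  exists H : R * U -> W,
    {within (`[0%R, 1%R] : set R) `*` A, continuous H} /\
    H @` ((`[0%R, 1%R] : set R) `*` A) `<=` B /\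
    (forall x, A x -> H (0, x) = f x /\ H (1, x) = g x).

Definition homotopy_equivalent (R : realType) (U W : topologicalType)
    (A : set U) (B : set W) : Prop :=
  exists (f : U -> W) (g : W -> U),
    {within A, continuous f} /\ f @` A `<=` B /\
    {within B, continuous g} /\ g @` B `<=` A /\
    homotopic_in R A A (g \o f) idfun /\ homotopic_in R B B (f \o g) idfun.

Definition indep_real (R : realType) (V : finType) (adj : rel V) (S : {set V}) :=
  @realization R V (indep_in adj S).
Arguments indep_real R {V} adj S.
Arguments homotopy_equivalent R {U W} A B.
Arguments homotopic_in R {U W} A B f g.

(* Deleting a_{t-1} from G_{n,t} leaves the path b_{t-1,2}, ..., b_{t,n-1}, a_t,
   c_{t,n-1}, ..., c_{t-1,2} of N = 4(n-1) - 1 = 3k + 1 vertices q_1, ..., q_N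
   (k = 4m - 2), whose neighbours off the path, b_{t-1,1} and c_{t-1,1}, are
   neighbours of w = a_{t-2}.  For such a hanging path the realization of I(G)
   deformation retracts onto that of I(G \ w) by straight-line retractions: for
   j < k, the faces containing both w and q_{3j+3} are removed by sliding the
   weight of w and q_{3j+3} onto q_{3j+1}, which can join any such face since
   q_{3j} was excluded at the previous stage and q_{3j+2} is adjacent to
   q_{3j+3}; finally the weight of w slides onto q_N. *)

From Pilot Require Import Defs.
From HB Require Import structures.
From mathcomp Require Import all_boot all_order all_algebra.
From mathcomp Require Import all_classical all_reals.
From mathcomp Require Import topology normedtype.
From mathcomp Require Import lra zify.
Import numFieldNormedType.Exports.
Set Implicit Arguments. Unset Strict Implicit. Unset Printing Implicit Defensive.
Import Order.TTheory GRing.Theory Num.Theory.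
Local Open Scope classical_set_scope.
Local Open Scope ring_scope.

Section DeformationRetraction.
Variables (R : realType) (E : normedModType R).

Definition segment_retraction (A B : set E) (r : E -> E) :=
  [/\ continuous r, B `<=` A, (forall x, A x -> B (r x)),
      (forall x, B x -> r x = x) &
      (forall x s, A x -> 0 <= s <= 1 -> A ((1 - s) *: r x + s *: x))].

Definition deformation_retraction (A B : set E) (H : R * E -> E) :=
  [/\ continuous H, B `<=` A,
      (forall s x, 0 <= s <= 1 -> A x -> A (H (s, x))),
      (forall x, A x -> B (H (0, x)) /\ H (1, x) = x) &
      (forall x, B x -> H (0, x) = x)].

Definition deformation_retract (A B : set E) := exists H, deformation_retraction A B H.

Lemma deformation_retract_refl (A : set E) : deformation_retract A A.
Proof. by exists snd; split=> // -[s x]; apply: cvg_snd. Qed.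

Let lower_half (s : R) : R := Num.min (2 * s) 1.
Let upper_half (s : R) : R := Num.max (2 * s - 1) 0.

Let lower_half_continuous : continuous lower_half.
Proof.
move=> s; apply: (@continuous_min R R (fun s => 2 * s) (fun=> 1)); last exact: cvg_cst.
by apply: continuousM => //; apply: cvg_cst.
Qed.

Let upper_half_continuous : continuous upper_half.
Proof.
move=> s; apply: (@continuous_max R R (fun s => 2 * s - 1) (fun=> 0)); last exact: cvg_cst.
by apply: continuousB; [apply: continuousM => //|]; apply: cvg_cst.
Qed.

(* First run the deformation of [B] on [r x] at double speed, then slide back
   from [r x] to [x] along the segment; the convex combination with weights
   [upper_half] glues the two halves without any case split. *)
Lemma deformation_retract_segment_trans (A B C : set E) r :
  segment_retraction A B r -> deformation_retract B C -> deformation_retract A C.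
Proof.
case=> rc BA rB rid rseg [H [Hc CB HB Hret Hid]].
exists (fun p => (1 - upper_half p.1) *: H (lower_half p.1, r p.2) + upper_half p.1 *: p.2).
have [l0 u0] : lower_half 0 = 0 /\ upper_half 0 = 0.
  by rewrite /lower_half /upper_half mulr0 add0r; split; [apply/min_idPl|apply/max_idPr; lra].
have u1 : upper_half 1 = 1 by rewrite /upper_half mulr1 addrK; apply/max_idPl; lra.
have fst_continuous : continuous (fst : R * E -> R) by move=> [? ?]; apply: cvg_fst.
have snd_continuous : continuous (snd : R * E -> E) by move=> [? ?]; apply: cvg_snd.
split.
- move=> p; apply: cvgD; apply: cvgZ; last exact: snd_continuous.
  + apply: cvgB; first exact: cvg_cst.
    by apply: continuous_comp; [apply: fst_continuous|apply: upper_half_continuous].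
  + apply: (@continuous_comp _ _ _ (fun q : R * E => (lower_half q.1, r q.2)) H); last exact: Hc.
    have lower_p : (fun q : R * E => lower_half q.1) @ p --> lower_half p.1.
      by apply: continuous_comp; [apply: fst_continuous|apply: lower_half_continuous].
    have r_p : (fun q : R * E => r q.2) @ p --> r p.2.
      by apply: continuous_comp; [apply: snd_continuous|apply: rc].
    exact: cvg_pair lower_p r_p.
  + by apply: continuous_comp; [apply: fst_continuous|apply: upper_half_continuous].
- by move=> x /CB /BA.
- move=> s x /andP[s0 s1] Ax /=; have [hs|hs] := leP s (2^-1).
    have -> : upper_half s = 0 by apply/max_idPr; lra.
    rewrite subr0 scale1r scale0r addr0; apply/BA/HB; last exact: rB.
    by apply/andP; rewrite le_min ge_min lexx orbT; split=> //; apply/andP; split; lra.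
  have -> : lower_half s = 1 by apply/min_idPr; lra.
  rewrite (Hret _ (rB _ Ax)).2; apply: rseg => //.
  by rewrite le_max ge_max lexx ler01 /= andbT; lra.
- by move=> x Ax /=; rewrite l0 u0 u1 subr0 subrr !scale0r !scale1r addr0 add0r;
    split; [apply: (Hret _ (rB _ Ax)).1|].
- move=> x Cx /=; rewrite l0 u0 subr0 scale1r scale0r addr0 rid ?Hid //; exact: CB.
Qed.

Lemma deformation_retract_chain (A : nat -> set E) n :
  (forall j, (j < n)%N -> exists r, segment_retraction (A j) (A j.+1) r) ->
  deformation_retract (A 0%N) (A n).
Proof.
move=> step; suff chain d j : (j + d = n)%N -> deformation_retract (A j) (A n) by exact: chain.
elim: d j => [j|d IH j jd]; first by rewrite addn0 => ->; apply: deformation_retract_refl.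
have [r hr] := step j ltac:(lia).
by apply: deformation_retract_segment_trans hr (IH _ _); lia.
Qed.

Lemma deformation_retract_homotopy_equivalent (A B : set E) :
  deformation_retract A B -> homotopy_equivalent R A B.
Proof.
move=> [H [Hc BA HA Hret Hid]].
have H0_continuous : continuous (fun x => H (0, x)).
  move=> x; apply: (@continuous_comp _ _ _ (fun x : E => ((0 : R), x)) H); last exact: Hc.
  by apply: (@cvg_pair _ _ _ _ (nbhs (0 : R^o))); [exact: cvg_cst|exact: cvg_id].
exists (fun x => H (0, x)), id.
split; first exact: continuous_subspaceT.
split; first by move=> _ [x Ax <-]; apply: (Hret x Ax).1.
split; first by apply: continuous_subspaceT => x; apply: cvg_id.
split; first by move=> _ [x Bx <-]; apply: BA.
split.
  exists H; split; first exact: continuous_subspaceT.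
  split; first by move=> _ [[s x] [/= sI Ax] <-]; apply: HA => //; move: sI; rewrite in_itv.
  by move=> x Ax; rewrite (Hret x Ax).2.
exists snd; split; first by apply: continuous_subspaceT => -[s x]; apply: cvg_snd.
split; first by move=> _ [[s x] [_ Bx] <-].
by move=> x Bx /=; rewrite Hid.
Qed.

End DeformationRetraction.

Section Realization.
Variables (R : realType) (V : finType).
Local Notation E := 'rV[R]_#|V|.
Local Notation coord := Defs.coord.
Local Notation realization := (@realization R V).

Definition supp (x : E) : {set V} := [set v | coord x v != 0].
Definition mass (x : E) : R := \sum_v coord x v.
Definition vertex (v : V) : E := delta_mx 0 (enum_rank v).
Definition down_closed (K : pred {set V}) := forall s t : {set V}, K s -> t \subset s -> K t.

Lemma coordD (x y : E) v : coord (x + y) v = coord x v + coord y v.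
Proof. by rewrite /coord mxE. Qed.

Lemma coordB (x y : E) v : coord (x - y) v = coord x v - coord y v.
Proof. by rewrite /coord !mxE. Qed.

Lemma coordZ a (x : E) v : coord (a *: x) v = a * coord x v.
Proof. by rewrite /coord mxE. Qed.

Lemma coord_vertex u v : coord (vertex v) u = (u == v)%:R.
Proof. by rewrite /coord mxE eqxx (can_eq enum_rankK). Qed.

Lemma continuous_coord v : continuous (fun x : E => coord x v).
Proof. by move=> x; apply: coord_continuous. Qed.

Lemma massD x y : mass (x + y) = mass x + mass y.
Proof. by rewrite /mass -big_split; apply: eq_bigr => v _; rewrite coordD. Qed.

Lemma massB x y : mass (x - y) = mass x - mass y.
Proof. by rewrite /mass -sumrB; apply: eq_bigr => v _; rewrite coordB. Qed.

Lemma massZ a x : mass (a *: x) = a * mass x.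
Proof. by rewrite /mass mulr_sumr; apply: eq_bigr => v _; rewrite coordZ. Qed.

Lemma mass_vertex v : mass (vertex v) = 1.
Proof.
rewrite /mass (bigD1 v) //= coord_vertex eqxx big1 ?addr0 // => u /negbTE uv.
by rewrite coord_vertex uv.
Qed.

Lemma in_supp x v : (v \in supp x) = (coord x v != 0).
Proof. by rewrite inE. Qed.

Lemma eq_realization (K L : pred {set V}) : K =1 L -> realization K = realization L.
Proof.
by move=> KL; apply/seteqP; split=> x [x0 [x1 Kx]]; do 2 split=> //; [rewrite -KL|rewrite KL].
Qed.

Lemma realization_segment (K : pred {set V}) (x y : E) s :
  down_closed K -> (forall v, 0 <= coord x v) -> (forall v, 0 <= coord y v) ->
  mass x = 1 -> mass y = 1 -> K (supp x :|: supp y) -> 0 <= s <= 1 ->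
  realization K ((1 - s) *: x + s *: y).
Proof.
move=> dK x0 y0 x1 y1 Kxy /andP[s0 s1]; split.
  by move=> v; rewrite coordD !coordZ addr_ge0 // mulr_ge0 // subr_ge0.
split; first by rewrite -/(mass _) massD !massZ x1 y1 !mulr1 subrK.
apply: (dK _ _ Kxy); apply/fintype.subsetP => v; rewrite inE coordD !coordZ.
by apply: contraR; rewrite !inE negb_or !negbK => /andP[/eqP-> /eqP->]; rewrite !mulr0 addr0.
Qed.

Lemma translation_segment_retraction (K L : pred {set V}) (mu : E -> R) (d : E) :
  down_closed K -> (forall s, L s -> K s) -> continuous mu -> mass d = 0 ->
  (forall x, realization L x -> mu x = 0) ->
  (forall x, realization K x -> forall v, 0 <= coord (x + mu x *: d) v) ->
  (forall x, realization K x -> L (supp (x + mu x *: d))) ->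
  (forall x, realization K x -> K (supp x :|: supp (x + mu x *: d))) ->
  segment_retraction (realization K) (realization L) (fun x => x + mu x *: d).
Proof.
move=> dK LK muc d0 muL rge0 rL rK.
have rmass x : mass (x + mu x *: d) = mass x by rewrite massD massZ d0 mulr0 addr0.
have rreal x : realization K x -> realization L (x + mu x *: d).
  move=> Kx; split; first exact: rge0.
  by split; [case: Kx => _ [x1 _]; rewrite -/(mass _) rmass|exact: rL].
split=> //.
- move=> x; have x_x : (fun y : E => y) @ x --> x by apply: cvg_id.
  exact: cvgD x_x (cvgZ (muc x) (cvg_cst d)).
- by move=> x [x0 [x1 Lx]]; do 2 split=> //; apply: LK.
- by move=> x /muL ->; rewrite scale0r addr0.
move=> x s Kx s01; case: (rreal x Kx) => r0 [r1 _]; case: (Kx) => x0 [x1 _].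
by apply: realization_segment => //; rewrite finset.setUC; apply: rK.
Qed.

Section Slide.
Variables (K L : pred {set V}) (w z : V).
Hypotheses (zw : z != w) (dK : down_closed K).
Hypothesis hL : forall s, L s = K s && (w \notin s).
Hypothesis Kz : forall s, K s -> w \in s -> K (z |: s).

Let d := vertex z - vertex w.

Let coord_slide (x : E) a v :
  coord (x + a *: d) v = if v == z then coord x v + a
                         else if v == w then coord x v - a else coord x v.
Proof.
rewrite coordD coordZ coordB !coord_vertex.
have [->|_] := eqVneq v z; first by rewrite (negbTE zw) /=; lra.
by have [->|_] := eqVneq v w; rewrite /=; lra.
Qed.

Lemma slide_retraction :
  segment_retraction (realization K) (realization L) (fun x => x + coord x w *: d).
Proof.
have LK s : L s -> K s by rewrite hL => /andP[].
have r_supp x : supp (x + coord x w *: d) \subset z |: supp x :\ w.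
  apply/fintype.subsetP => v; rewrite !inE coord_slide.
  have [//|_] := eqVneq v z.
  by have [->|//] := eqVneq v w; rewrite subrr eqxx.
have rK x : realization K x -> K (supp x :|: supp (x + coord x w *: d)).
  case=> _ [_ Kx]; have [xw0|xw] := eqVneq (coord x w) 0.
    by rewrite xw0 scale0r addr0 finset.setUid.
  apply: dK (Kz Kx _) _; first by rewrite in_supp.
  rewrite finset.subUset finset.subsetUr.
  exact: fintype.subset_trans (r_supp x) (finset.setUS _ (subD1set _ _)).
apply: translation_segment_retraction => //.
- exact: continuous_coord.
- by rewrite massB !mass_vertex subrr.
- by move=> x [_ [_]]; rewrite hL in_supp negbK => /andP[_ /eqP].
- move=> x [x0 _] v; rewrite coord_slide; case: eqVneq => _; first by rewrite addr_ge0.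
  by case: eqVneq => [->|_]; rewrite ?subrr.
- move=> x Kx; rewrite hL (dK (rK x Kx) (finset.subsetUr _ _)) /=.
  by apply/negP => /(fintype.subsetP (r_supp x)); rewrite !inE eqxx eq_sym (negbTE zw).
Qed.

End Slide.

Section PairSlide.
Variables (K L : pred {set V}) (u w z : V).
Hypotheses (uw : u != w) (zu : z != u) (zw : z != w) (dK : down_closed K).
Hypothesis hL : forall s, L s = K s && ~~ ((u \in s) && (w \in s)).
Hypothesis Kz : forall s, K s -> u \in s -> w \in s -> K (z |: s).

Let d := vertex z + vertex z - vertex u - vertex w.
Let mu (x : E) := Num.min (coord x u) (coord x w).

Let coord_pair_slide (x : E) a v :
  coord (x + a *: d) v = if v == z then coord x v + 2 * a
                         else if (v == u) || (v == w) then coord x v - a else coord x v.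
Proof.
rewrite coordD coordZ !coordB coordD !coord_vertex.
have [->|_] := eqVneq v z; first by rewrite (negbTE zu) (negbTE zw) /=; lra.
have [->|_] := eqVneq v u; first by rewrite (negbTE uw) /=; lra.
by have [->|_] := eqVneq v w; rewrite /=; lra.
Qed.

Lemma pair_slide_retraction :
  segment_retraction (realization K) (realization L) (fun x => x + mu x *: d).
Proof.
have LK s : L s -> K s by rewrite hL => /andP[].
have mu_le x : mu x <= coord x u /\ mu x <= coord x w by rewrite !ge_min !lexx orbT.
have mu_ge0 x : (forall v, 0 <= coord x v) -> 0 <= mu x by move=> x0; rewrite le_min !x0.
have mu_attained x : exists2 v, (v == u) || (v == w) & mu x = coord x v.
  by rewrite /mu; case: leP => _; [exists u|exists w]; rewrite ?eqxx ?orbT.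
have r_supp x : u \in supp x -> w \in supp x -> supp (x + mu x *: d) \subset z |: supp x.
  move=> us ws; apply/fintype.subsetP => v; rewrite !inE coord_pair_slide.
  have [//|_] := eqVneq v z; case: ifP => [vuw _|//].
  by rewrite -in_supp; case/orP: vuw => /eqP->.
have rK x : realization K x -> K (supp x :|: supp (x + mu x *: d)).
  case=> x0 [_ Kx]; have [m0|m0] := eqVneq (mu x) 0.
    by rewrite m0 scale0r addr0 finset.setUid.
  have m_gt0 : 0 < mu x by rewrite lt0r m0 mu_ge0.
  have [us ws] : u \in supp x /\ w \in supp x.
    by rewrite !in_supp; case: (mu_le x) => *; split; apply: lt0r_neq0; lra.
  by apply: dK (Kz Kx us ws) _; rewrite finset.subUset finset.subsetUr r_supp.
apply: translation_segment_retraction => //.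
- by move=> x; apply: continuous_min; apply: continuous_coord.
- by rewrite !massB massD !mass_vertex; lra.
- move=> x [x0 [_]]; rewrite hL !in_supp negb_and !negbK => /andP[_ uw0].
  by apply: le_anti; rewrite mu_ge0 // andbT; case/orP: uw0 => /eqP <-; apply mu_le.
- move=> x [x0 _] v; rewrite coord_pair_slide; case: eqVneq => _.
    by rewrite addr_ge0 ?mulr_ge0 ?mu_ge0.
  case: ifP => [vuw|_]; last exact: x0.
  by rewrite subr_ge0; case/orP: vuw => /eqP->; case: (mu_le x).
- move=> x Kx; rewrite hL (dK (rK x Kx) (finset.subsetUr _ _)) /=.
  have [v0 v0uw mu_v0] := mu_attained x.
  have v0z : (v0 == z) = false by apply: contraTF v0uw => /eqP->; rewrite negb_or zu zw.
  have : v0 \notin supp (x + mu x *: d).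
    by rewrite in_supp coord_pair_slide v0z v0uw mu_v0 subrr eqxx.
  by apply: contra => /andP[us ws]; case/orP: v0uw => /eqP->.
Qed.

End PairSlide.

End Realization.

Section IndependenceComplex.
Variables (V : finType) (adj : rel V).
Hypotheses (adj_sym : symmetric adj) (adj_irr : irreflexive adj).

Lemma indepP (T s : {set V}) :
  reflect (s \subset T /\ {in s &, forall x y, ~~ adj x y}) (indep_in adj T s).
Proof.
apply: (iffP andP) => [[sT /forallP h]|[sT h]]; split=> //.
  by move=> x y xs ys; move/implyP: (h x) => /(_ xs) /forallP /(_ y) /implyP; apply.
by apply/forallP => x; apply/implyP => xs; apply/forallP => y; apply/implyP; apply: h.
Qed.

Lemma indep_down_closed T : down_closed (indep_in adj T).
Proof.
move=> s t /indepP[sT h] ts; apply/indepP; split; first exact: fintype.subset_trans ts sT.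
by move=> x y xt yt; apply: h; apply: (fintype.subsetP ts).
Qed.

Lemma indep_setU1 (T s : {set V}) z : indep_in adj T s -> z \in T ->
  {in s, forall y, ~~ adj z y} -> indep_in adj T (z |: s).
Proof.
move=> /indepP[sT h] zT zs; apply/indepP; split.
  by rewrite finset.subUset finset.sub1set zT.
move=> x y; rewrite !inE => /orP[/eqP->|xs] /orP[/eqP->|ys].
- by rewrite adj_irr.
- exact: zs.
- by rewrite adj_sym zs.
- exact: h.
Qed.

Lemma indep_setD1 (T s : {set V}) w :
  indep_in adj (T :\ w) s = indep_in adj T s && (w \notin s).
Proof. by rewrite /indep_in subsetD1 andbAC. Qed.

Section HangingPath.
Variables (S : {set V}) (w : V) (q : nat -> V) (k : nat).
Local Open Scope nat_scope.
Local Notation N := (3 * k).+1.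
Hypothesis qS : forall i, 0 < i <= N -> q i \in S.
Hypothesis qw : forall i, 0 < i <= N -> q i != w.
Hypothesis q_inj : {in [pred i | 0 < i <= N] &, injective q}.
Hypothesis q_path : forall i, 0 < i < N -> adj (q i) (q i.+1).
Hypothesis q_nbr : forall i y, 0 < i <= N -> y \in S -> adj (q i) y ->
  [|| adj w y, (1 < i) && (y == q i.-1) | (i < N) && (y == q i.+1)].

Definition path_complex (j : nat) : pred {set V} := fun s =>
  indep_in adj S s && ((w \in s) ==> [forall i : 'I_j, q (3 * i.+1) \notin s]).

Lemma path_complexP j s :
  reflect (indep_in adj S s /\ (w \in s -> forall i, i < j -> q (3 * i.+1) \notin s))
          (path_complex j s).
Proof.
apply: (iffP andP) => [[Is /implyP h]|[Is h]]; split=> //.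
  by move=> ws i ij; apply: (forallP (h ws) (Ordinal ij)).
by apply/implyP => ws; apply/forallP => i; apply: h ws _ (ltn_ord i).
Qed.

Lemma path_complex_down_closed j : down_closed (path_complex j).
Proof.
move=> s t /path_complexP[Is h] ts; apply/path_complexP; split.
  exact: indep_down_closed Is ts.
move=> /(fintype.subsetP ts) ws i ij; apply: contra (h ws i ij).
exact: (fintype.subsetP ts).
Qed.

Lemma path_complex0 : path_complex 0 =1 indep_in adj S.
Proof. by move=> s; apply/path_complexP/idP => [[]|Is]. Qed.

Lemma path_complexS j s :
  path_complex j.+1 s = path_complex j s && ~~ ((q (3 * j.+1) \in s) && (w \in s)).
Proof.
apply/path_complexP/andP => [[Is h]|[/path_complexP[Is h] not_both]]; split=> //.
- by apply/path_complexP; split=> // ws i ij; apply: h; lia.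
- by apply/negP => /andP[qs ws]; move: (h ws j (ltnSn j)); rewrite qs.
- move=> ws i; rewrite ltnS leq_eqVlt => /orP[/eqP->|]; last exact: h.
  by move: not_both; rewrite ws andbT.
Qed.

Lemma path_complex_setD1 j s :
  indep_in adj (S :\ w) s = path_complex j s && (w \notin s).
Proof. by rewrite indep_setD1 /path_complex; case: (w \in s); rewrite /= ?andbF ?andbT. Qed.

Lemma path_complex_setU1 j s : j <= k -> path_complex j s -> w \in s ->
  (j < k -> q (3 * j).+2 \notin s) -> path_complex j (q (3 * j).+1 |: s).
Proof.
move=> jk /path_complexP[Is blocked] ws next; have [sS sI] := indepP _ _ Is.
have z_range : 0 < (3 * j).+1 <= N by lia.
apply/path_complexP; split.
  apply: indep_setU1 => //; first exact: qS.
  move=> y ys; apply/negP => zy.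
  case/or3P: (q_nbr z_range (fintype.subsetP sS _ ys) zy)
    => [wy|/andP[j0 /eqP ey]|/andP[jN /eqP ey]].
  - by move: (sI _ _ ws ys); rewrite wy.
  - have: q (3 * (j.-1).+1) \notin s by apply: blocked; lia.
    by have -> : 3 * (j.-1).+1 = (3 * j).+1.-1 by [lia]; rewrite -ey ys.
  - by move: (next ltac:(lia)); rewrite -ey ys.
move=> _ i ij; rewrite !inE negb_or blocked // andbT.
by apply/eqP => /q_inj; rewrite !inE => /(_ _ z_range); lia.
Qed.

Theorem indep_real_setD1_hanging_path (R : realType) :
  homotopy_equivalent R (indep_real R adj S) (indep_real R adj (S :\ w)).
Proof.
pose A j := @realization R V (if j <= k then path_complex j else indep_in adj (S :\ w)).
have -> : indep_real R adj S = A 0 by rewrite /A /= (eq_realization R path_complex0).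
have -> : indep_real R adj (S :\ w) = A k.+1 by rewrite /A ltnn.
apply/deformation_retract_homotopy_equivalent/deformation_retract_chain => j.
rewrite ltnS leq_eqVlt => /orP[/eqP->|jk]; rewrite /A ?leqnn ?ltnn ?jk ?(ltnW jk).
  eexists; apply: (@slide_retraction _ _ _ _ w (q N)); first by apply: qw; lia.
  - exact: path_complex_down_closed.
  - exact: path_complex_setD1.
  - by move=> s Ks ws; apply: path_complex_setU1; rewrite ?ltnn.
have u_range : 0 < 3 * j.+1 <= N by lia.
have z_range : 0 < (3 * j).+1 <= N by lia.
eexists; apply: (@pair_slide_retraction _ _ _ _ (q (3 * j.+1)) w (q (3 * j).+1)).
- exact: qw u_range.
- by apply/eqP => /q_inj; rewrite !inE => /(_ z_range u_range); lia.
- exact: qw z_range.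
- exact: path_complex_down_closed.
- exact: path_complexS.
move=> s Ks us ws; have [_ sI] := indepP _ _ (andP Ks).1.
apply: path_complex_setU1 (ltnW jk) Ks ws _ => _.
apply/negP => next; move: (sI _ _ us next); rewrite adj_sym.
have -> : 3 * j.+1 = (3 * j).+2.+1 by lia.
by rewrite q_path //; lia.
Qed.

End HangingPath.

End IndependenceComplex.

Lemma Gadj_sym n t : symmetric (@Gadj n t).
Proof. by move=> u v; rewrite /Gadj orbC. Qed.

Lemma Gadj_irr n t : irreflexive (@Gadj n t).
Proof.
case=> [k|[[i j] c]]; rewrite /Gadj orbb //= eqxx /=.
by apply/negP => /orP[/andP[_ /eqP]|/andP[/andP[/eqP]]]; lia.
Qed.

Section LadderGraph.
Local Open Scope nat_scope.
Variables (m t : nat).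
Hypotheses (m_gt0 : 0 < m) (t_gt1 : 1 < t).
Local Notation n := (3 * m).
Local Notation M := (3 * m).-1.
Local Notation N := (3 * (4 * m - 2)).+1.

(* a_k is labelled (0, k), and b_{i+1,j+1}, c_{i+1,j+1} are labelled (1, i M + j),
   (2, i M + j): the b's and the c's then form two paths in the order of their
   labels, and a_k is adjacent to the b and c labelled k M - 1 and k M. *)
Definition label (v : Gvert n t) : nat * nat :=
  match v with
  | inl k => (0, val k)
  | inr (i, j, c) => ((if c then 2 else 1), val i * M + val j)
  end.

Definition label_adj (a b : nat * nat) : bool :=
  if a.1 == 0 then (b.1 != 0) && ((b.2 == a.2 * M) || (b.2.+1 == a.2 * M))
  else (a.1 == b.1) && (a.2.+1 == b.2).

Definition valid_label (a : nat * nat) : bool :=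
  if a.1 == 0 then a.2 <= t else (a.1 <= 2) && (a.2 < t * M).

Lemma label_chain_inj i j i' j' : j < M -> j' < M -> i * M + j = i' * M + j' ->
  i = i' /\ j = j'.
Proof. by move=> hj hj' /(congr1 (edivn^~ M)); rewrite !edivn_eq // => -[-> ->]. Qed.

Lemma label_chain_adj i j i' j' : j < M -> j' < M ->
  (i == i') && (j.+1 == j') || (i.+1 == i') && (j == n - 2) && (j' == 0) =
  ((i * M + j).+1 == i' * M + j').
Proof.
move=> hj hj'; apply/idP/eqP.
  by case/orP=> [/andP[/eqP<- /eqP<-]|/andP[/andP[/eqP<- /eqP->] /eqP->]]; nia.
move=> e; have [jM|jM] := ltnP j.+1 M.
  by move: e; rewrite -addnS => /(label_chain_inj jM hj') [<- <-]; rewrite !eqxx.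
have e' : i.+1 * M + 0 = i' * M + j' by rewrite -e mulSn; lia.
have [<- <-] := label_chain_inj (ltac:(lia) : 0 < M) hj' e'.
by apply/orP; right; rewrite !eqxx andbT; apply/eqP; lia.
Qed.

Lemma label_rung_adj k i j : j < M ->
  ((k == i) && (j == 0)) || ((k == i.+1) && (j == n - 2)) =
  ((i * M + j == k * M) || ((i * M + j).+1 == k * M)).
Proof.
move=> hj; apply/idP/idP.
  by case/orP=> [/andP[/eqP-> /eqP->]|/andP[/eqP-> /eqP->]];
    apply/orP; [left|right]; apply/eqP; nia.
case/orP=> /eqP e.
  by have [-> ->] := @label_chain_inj i j k 0 hj ltac:(lia) ltac:(lia); rewrite !eqxx.
have [jM|jM] := ltnP j.+1 M.
  by have [] := @label_chain_inj i j.+1 k 0 jM ltac:(lia) ltac:(lia).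
have [<- _] := @label_chain_inj i.+1 0 k 0 ltac:(lia) ltac:(lia) ltac:(nia).
by apply/orP; right; rewrite eqxx; apply/eqP; lia.
Qed.

Lemma Gadj_label u v :
  Gadj u v = label_adj (label u) (label v) || label_adj (label v) (label u).
Proof.
have Gadj0_label x y : Gadj0 x y = label_adj (label x) (label y).
  case: x => [k|[[i j] c]]; case: y => [k'|[[i' j'] c']] //=; rewrite /label_adj /=.
  - by case: c'; rewrite /= label_rung_adj.
  - by case: c.
  - by rewrite -label_chain_adj //; case: c; case: c'.
by rewrite /Gadj !Gadj0_label.
Qed.

Lemma label_inj : injective label.
Proof.
case=> [k|[[i j] c]] [k'|[[i' j'] c']] //=.
- by case=> e; congr inl; apply: val_inj.
- by case: c'.
- by case: c.
case=> ec /(label_chain_inj (ltn_ord j) (ltn_ord j')) [/val_inj-> /val_inj->].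
by have -> : c = c' by move: ec; case: c; case: c'.
Qed.

Lemma valid_label_label v : valid_label (label v).
Proof.
case: v => [k|[[i j] c]]; rewrite /valid_label /=; first by rewrite -ltnS.
have := ltn_ord i; have := ltn_ord j; case: c => /= *; nia.
Qed.

Lemma valid_labelP a : valid_label a -> exists v, label v = a.
Proof.
case: a => c l; rewrite /valid_label /=; case: eqP => [->|c0 /andP[c2 lt]].
  by exists (inl (inord l)); rewrite /= inordK.
have M_gt0 : 0 < M by lia.
have i_lt : l %/ M < t by rewrite ltn_divLR.
have j_lt : l %% M < M by rewrite ltn_pmod.
exists (inr (Ordinal i_lt, Ordinal j_lt, c == 2)) => /=.
by rewrite -divn_eq; congr (_, _); case: (c) c0 c2 => [|[|[|]]].
Qed.

Lemma label_avert k : k <= t -> label (avert n t k) = (0, k).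
Proof. by move=> kt; rewrite /= inordK. Qed.

(* Positions 1, ..., 4 M - 1 = N run through b_{t-1,2}, ..., b_{t,n-1}, a_t,
   c_{t,n-1}, ..., c_{t-1,2}; positions 0 and 4 M would be b_{t-1,1} and
   c_{t-1,1}, the neighbours of a_{t-2} at the two ends. *)
Definition path_label (i : nat) : nat * nat :=
  if i < 2 * M then (1, (t - 2) * M + i)
  else if i == 2 * M then (0, t) else (2, (t - 2) * M + 4 * M - i).

Definition path_vertex (i : nat) : Gvert n t :=
  odflt (inl ord0) [pick v | label v == path_label i].

Lemma chain_length_split : t * M = (t - 2) * M + 2 * M.
Proof. by rewrite -mulnDl subnK. Qed.

Lemma path_label_b i : i < 2 * M -> path_label i = (1, (t - 2) * M + i).
Proof. by rewrite /path_label => ->. Qed.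

Lemma path_label_a i : i = 2 * M -> path_label i = (0, t).
Proof. by rewrite /path_label => ->; rewrite ltnn eqxx. Qed.

Lemma path_label_c i : 2 * M < i -> path_label i = (2, (t - 2) * M + 4 * M - i).
Proof. by rewrite /path_label => hi; rewrite ltnNge (ltnW hi) gtn_eqF. Qed.

Ltac eval_path_label i :=
  first [ rewrite (@path_label_b i); last lia
        | rewrite (@path_label_a i); last lia
        | rewrite (@path_label_c i); last lia ].

Ltac path_label_cases i :=
  have [?|?] := ltnP i.+1 (2 * M);
  [ | have [?|?] := ltnP i (2 * M);
      [ | have [?|?] := eqVneq i (2 * M); [ | have [?|?] := eqVneq i (2 * M).+1 ]]];
  eval_path_label i; try eval_path_label i.+1; try eval_path_label i.-1.

(* The products with [M] become opaque atoms, related only by [chain_length_split]. *)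
Ltac lia_atoms x :=
  have := chain_length_split; repeat match goal with H : context[_ * M] |- _ => revert H end;
  generalize (t * M) ((t - 2) * M) (x * M); intros; lia.

Lemma valid_path_label i : 0 < i <= N -> valid_label (path_label i).
Proof. by move=> hi; path_label_cases i; rewrite /valid_label /=; lia_atoms i. Qed.

Lemma label_path_vertex i : 0 < i <= N -> label (path_vertex i) = path_label i.
Proof.
move=> hi; rewrite /path_vertex; case: pickP => [v /eqP //|none].
by have [v hv] := valid_labelP (valid_path_label hi); move: (none v); rewrite hv eqxx.
Qed.

Lemma eq_path_vertex i v : 0 < i <= N -> (path_vertex i == v) = (path_label i == label v).
Proof. by move=> hi; rewrite -label_path_vertex // (inj_eq label_inj). Qed.

Lemma path_label_nbr i a : 0 < i <= N -> valid_label a -> a != (0, t.-1) ->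
  label_adj (path_label i) a || label_adj a (path_label i) ->
  [|| label_adj (0, t - 2) a || label_adj a (0, t - 2),
      (1 < i) && (a == path_label i.-1) | (i < N) && (a == path_label i.+1)].
Proof.
case: a => c l hi; rewrite /valid_label /=; case: eqVneq => [->|c0] la.
  have [lt2|lt2] := leqP l (t - 2).
    have lM : l * M <= (t - 2) * M by rewrite leq_mul2r lt2 orbT.
    by move=> _; path_label_cases i; rewrite /label_adj /= ?xpair_eqE; lia_atoms l.
  rewrite xpair_eqE /= => lt1; have -> : l = t by lia.
  by path_label_cases i; rewrite /label_adj /= ?xpair_eqE; lia_atoms l.
by move=> _; path_label_cases i; rewrite /label_adj /= (negbTE c0) ?xpair_eqE; lia_atoms l.
Qed.

Lemma path_vertex_in i : 0 < i <= N -> path_vertex i \in del1 (avert n t t.-1).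
Proof.
move=> hi; rewrite !inE eq_path_vertex // label_avert; last lia.
by path_label_cases i; rewrite xpair_eqE; lia.
Qed.

Lemma path_vertex_neq i : 0 < i <= N -> path_vertex i != avert n t (t - 2).
Proof.
move=> hi; rewrite eq_path_vertex // label_avert; last lia.
by path_label_cases i; rewrite xpair_eqE; lia.
Qed.

Lemma path_vertex_inj : {in [pred i | 0 < i <= N] &, injective path_vertex}.
Proof.
move=> i j; rewrite !inE => hi hj /eqP; rewrite eq_path_vertex // label_path_vertex //.
by path_label_cases i; path_label_cases j; rewrite xpair_eqE; lia_atoms i.
Qed.

Lemma path_vertex_adj i : 0 < i < N -> Gadj (path_vertex i) (path_vertex i.+1).
Proof.
move=> hi; rewrite Gadj_label !label_path_vertex; [|lia|lia].
by path_label_cases i; rewrite /label_adj /=; lia_atoms i.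
Qed.

Lemma path_vertex_nbr i y : 0 < i <= N -> y \in del1 (avert n t t.-1) ->
  Gadj (path_vertex i) y ->
  [|| Gadj (avert n t (t - 2)) y, (1 < i) && (y == path_vertex i.-1)
    | (i < N) && (y == path_vertex i.+1)].
Proof.
move=> hi; rewrite !inE -(inj_eq label_inj) !Gadj_label label_path_vertex //.
rewrite !label_avert; [|lia|lia].
have -> : (1 < i) && (y == path_vertex i.-1) = (1 < i) && (label y == path_label i.-1).
  by case: ltnP => //= i1; rewrite eq_sym eq_path_vertex; [exact: eq_sym|lia].
have -> : (i < N) && (y == path_vertex i.+1) = (i < N) && (label y == path_label i.+1).
  by case: ltnP => //= iN; rewrite eq_sym eq_path_vertex; [exact: eq_sym|lia].
exact: path_label_nbr (valid_label_label y).
Qed.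

End LadderGraph.

Theorem lemma3p13 (R : realType) (m t : nat) :
  (1 <= m)%N -> (2 <= t)%N ->
  homotopy_equivalent R
    (indep_real R (@Gadj (3 * m) t) (del1 (avert (3 * m) t t.-1)))
    (indep_real R (@Gadj (3 * m) t)
       (del2 (avert (3 * m) t t.-1) (avert (3 * m) t (t - 2)))).
Proof.
move=> m_gt0 t_gt1.
have -> : del2 (avert (3 * m) t t.-1) (avert (3 * m) t (t - 2)) =
          del1 (avert (3 * m) t t.-1) :\ avert (3 * m) t (t - 2).
  by apply/finset.setP => x; rewrite !inE andbC.
apply: (@indep_real_setD1_hanging_path _ _ _ _ _ _ (path_vertex m t) (4 * m - 2)).
- exact: Gadj_sym.
- exact: Gadj_irr.
- exact: path_vertex_in.
- exact: path_vertex_neq.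
- exact: path_vertex_inj.
- exact: path_vertex_adj.
- exact: path_vertex_nbr.
Qed.
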